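(* Let $q$ be a prime power and let $n$ be an even positive integer such that $n/2$ is odd. Then there exists an $n$-code of $\mathcal H_{n,q^2}$ of size $\frac{3q^{n}-q^{n/2}}{2}$.
   Context: $\mathcal H_{n,q^2}$ denotes the set of $n\times n$ Hermitian matrices over ${\rm GF}(q^2)$, i.e. matrices $A=(a_{ij})$ with $a_{ji}=a_{ij}^q$ for all $i,j$. The rank distance is $d_r(A,B)={\rm rk}(A-B)$. A $d$-code of $\mathcal H_{n,q^2}$ is a non-empty subset $\mathcal C$ whose minimum distance $\min\{{\rm rk}(c_1-c_2): c_1\neq c_2\in\mathcal C\}$ equals $d$. *)

From HB Require Import structures.
From mathcomp Require Import all_boot all_order all_algebra.
Set Implicit Arguments. Unset Strict Implicit. Unset Printing Implicit Defensive.
Import GRing.Theory.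
Local Open Scope ring_scope.

Definition prime_power (q : nat) : Prop :=
  exists p k : nat, [/\ prime p, (0 < k)%N & q = (p ^ k)%N].

(* Hermitian n x n matrices over a field F = GF(q^2):
   a_ji = a_ij^q (Frobenius conjugation x |-> x^q). *)
Definition hermitian (F : fieldType) (q n : nat) (A : 'M[F]_n) : Prop :=
  forall i j : 'I_n, A j i = (A i j) ^+ q.

Definition is_hermitian_d_code (F : finFieldType) (q n d : nat)
    (C : {set 'M[F]_n}) : Prop :=
  [/\ C != set0,
      (forall c, c \in C -> hermitian q c),
      (exists c1 c2, [/\ c1 \in C, c2 \in C, c1 != c2 & \rank (c1 - c2)%R = d]) &
      (forall c1 c2, c1 \in C -> c2 \in C -> c1 != c2 -> (d <= \rank (c1 - c2)%R)%N)].

From HB Require Import structures.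
From mathcomp Require Import all_boot all_order all_algebra.
From mathcomp Require Import falgebra fieldext separable galois finfield ring zify.
Set Implicit Arguments. Unset Strict Implicit. Unset Printing Implicit Defensive.
Import GRing.Theory.
Local Open Scope ring_scope.

(* Let m = n/2 and let L be the degree-m extension of F = GF(q^2), so that
   sigma x = x^(q^m) is the involution of L over GF(q^m); as m is odd, sigma acts
   on F as c |-> c^q.  Given the trace form trF : L -> F and an F-basis of L,
   a matrix H = [[a, b], [sigma b, c]] over L with sigma a = a and sigma c = c
   gives the Hermitian Gram matrix over F of (u, v) |-> trF (u H sigma(v)^T) on
   L^2; it depends additively on H and is invertible as soon as
   det H = a c - b sigma b is nonzero.  Pick iota with sigma iota = - iota and a
   set T of representatives of the sigma-orbits of size two.  The matrices
   [[0, b], [sigma b, (b - sigma b) / iota]] (corner 0 unless b is in T), for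
   all b in L, and [[- iota (b - sigma b), b], [sigma b, 0]], for b in T, have
   pairwise differences of nonzero determinant: in the mixed case it equals
   - (b - sigma b') (sigma b - b'), and T contains no sigma-orbit.  There are
   q^(2m) + (q^(2m) - q^m)/2 of them. *)

Lemma natr_card (R : finNzRingType) : (#|R|%:R : R) = 0.
Proof.
have : \sum_(x : R) x = \sum_(x : R) (x + 1) := reindex_inj (addIr 1).
by rewrite big_split /= sumr_const -[LHS]addr0 => /addrI.
Qed.

Lemma size_XnsubX (R : nzRingType) N : (1 < N)%N -> size ('X^N - 'X : {poly R}) = N.+1.
Proof. by move=> N_gt1; rewrite size_polyDl ?size_polyXn // size_polyN size_polyX. Qed.

Lemma separable_XnsubX (R : idomainType) N :
  N%:R = 0 :> R -> separable_poly ('X^N - 'X : {poly R}).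
Proof.
move=> N0; rewrite unlock /separable_poly derivB derivXn derivX.
rewrite -scaler_nat N0 scale0r sub0r.
by rewrite -[-1](scaleN1r (1 : {poly R})) coprimepZr ?coprimep1 // oppr_eq0 oner_eq0.
Qed.

Lemma pchar_nat_card (F : finFieldType) : [pchar F].-nat #|F|.
Proof.
have [p p_pr pcharFp] := finPcharP F.
by rewrite (card_pprimeChar pcharFp) pnatX (pnatE _ p_pr) pcharFp.
Qed.

Lemma card_roots_lt_size (R : finIdomainType) (p : {poly R}) :
  p != 0 -> (#|[pred x | root p x]| < size p)%N.
Proof.
move=> p_neq0; rewrite cardE max_poly_roots ?enum_uniq //.
by apply/allP => x; rewrite mem_enum.
Qed.

Lemma card_finFieldExt (F : finFieldType) (L : fieldExtType F) :
  #|FinFieldExtType L| = (#|F| ^ \dim {:L})%N.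
Proof.
rewrite -(@card_vspacef F (finvect_type L) (Vector.class (finvect_type L : vectType F))).
by rewrite card_vspace.
Qed.

Lemma row2_kernel_eq0 (R : idomainType) (a b c d x y : R) :
  a * d != b * c -> x * a + y * c = 0 -> x * b + y * d = 0 -> x = 0 /\ y = 0.
Proof.
move=> det_neq0 eq1 eq2.
have det_mul z : z * (a * d - b * c) = 0 -> z = 0.
  by move/eqP; rewrite mulf_eq0 subr_eq0 (negbTE det_neq0) orbF => /eqP.
split; apply: det_mul.
- transitivity (d * (x * a + y * c) - c * (x * b + y * d)); first by ring.
  by rewrite eq1 eq2; ring.
- transitivity (a * (x * b + y * d) - b * (x * a + y * c)); first by ring.
  by rewrite eq1 eq2; ring.
Qed.

Section FiniteFieldExtension.

Variable F : finFieldType.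

Lemma splitting_XnsubX_fixed (L : splittingFieldType F) m :
  splittingFieldFor 1 (map_poly (in_alg L) ('X^(#|F| ^ m) - 'X)) {:L} ->
  forall x : L, x ^+ (#|F| ^ m) = x.
Proof.
move=> [zs DzsL defL].
have /finField_galois_generator[/= a _ Da]: (1 <= {:L})%VS by apply: sub1v.
rewrite dimv1 expn1 in Da.
have aX x : (a ^+ m)%g x = x ^+ (#|F| ^ m).
  elim: (m) => [|i IHi]; first by rewrite gal_id expn0 expr1.
  by rewrite expgSr expnSr exprM galM ?Da ?memvf // IHi.
pose E := fixedSpace (a ^+ m)%g.
suff E_full : E = {:L}%VS.
  by move=> x; rewrite -aX; apply/fixedSpaceP; rewrite -/E E_full memvf.
apply/eqP; rewrite eqEsubv subvf -defL -[E]subfield_closed agenvS //.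
rewrite subv_add sub1v; apply/span_subvP=> z.
rewrite -root_prod_XsubC -(eqp_root DzsL) (sameP fixedSpaceP eqP).
by rewrite rmorphB /= map_polyXn map_polyX /root !hornerE subr_eq0 aX.
Qed.

Lemma finField_ext_exists m : (0 < m)%N -> {L : splittingFieldType F | \dim {:L} = m}.
Proof.
move=> m_gt0; pose N := (#|F| ^ m)%N.
have F_gt1 := finNzRing_gt1 F.
have N_gt1 : (1 < N)%N by rewrite -(expn0 #|F|) ltn_exp2l.
have nzP : 'X^N - 'X != 0 :> {poly F} by rewrite -size_poly_gt0 size_XnsubX.
have [L splitL] := FinSplittingFieldFor nzP; exists L.
have fixL := splitting_XnsubX_fixed splitL.
have [zs Dzs _] := splitL; rewrite rmorphB /= map_polyXn map_polyX in Dzs.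
have N0 : N%:R = 0 :> L.
  by rewrite natrX -(rmorph_nat (in_alg L)) natr_card rmorph0 expr0n gtn_eqF.
have zs_uniq : uniq zs.
  by rewrite -separable_prod_XsubC -(eqp_separable Dzs) separable_XnsubX.
have L_zs : FinFieldExtType L =i zs.
  by move=> x; rewrite -root_prod_XsubC -(eqp_root Dzs) /root !hornerE fixL subrr eqxx.
have : #|FinFieldExtType L| = N.
  rewrite (eq_card L_zs) (card_uniqP (zs_uniq : uniq (zs : seq (FinFieldExtType L)))).
  by have := eqp_size Dzs; rewrite size_prod_XsubC size_XnsubX // => -[].
by rewrite card_finFieldExt => /eqP; rewrite eqn_exp2l // => /eqP.
Qed.

End FiniteFieldExtension.

Section FiniteFieldTrace.

Variables (F : finFieldType) (L : fieldExtType F).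
Local Notation d := (\dim {:L}).

Lemma pchar_nat_card_pow i : [pchar L].-nat (#|F| ^ i)%N.
Proof. by rewrite pnatX (eq_pnat _ (pchar_lalg L)) pchar_nat_card. Qed.

Lemma expf_card_pow (c : F) i : c ^+ (#|F| ^ i)%N = c.
Proof.
elim: i => [|i IHi]; first by rewrite expr1.
by rewrite expnSr exprM IHi expf_card.
Qed.

Lemma expr_card_dim (x : L) : x ^+ (#|F| ^ d)%N = x.
Proof. by have /esym/eqP := Fermat's_little_theorem {:L}%AS x; rewrite memvf. Qed.

Definition trace (x : L) : L := \sum_(i < d) x ^+ (#|F| ^ i)%N.

Lemma trace_is_linear : linear trace.
Proof.
move=> c x y; rewrite /trace scaler_sumr -big_split; apply: eq_bigr => i _ /=.
by rewrite exprDn_pchar ?pchar_nat_card_pow // exprZn expf_card_pow.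
Qed.
HB.instance Definition _ :=
  GRing.isSemilinear.Build F L L _ trace (GRing.semilinear_linear trace_is_linear).

Lemma trace_pchar_pow N x : [pchar L].-nat N -> trace (x ^+ N) = trace x ^+ N.
Proof.
move=> N_pchar; have N_gt0 : (0 < N)%N by case/andP: N_pchar.
rewrite /trace (big_morph (fun y : L => y ^+ N) (id1 := 0) (op1 := +%R)).
- by apply: eq_bigr => i _; rewrite -!exprM mulnC.
- by move=> a b; rewrite exprDn_pchar.
- by rewrite expr0n gtn_eqF.
Qed.

Lemma trace_expr_card x : trace (x ^+ #|F|) = trace x.
Proof.
rewrite /trace; case: d (expr_card_dim x) => [|d'] xK; first by rewrite !big_ord0.
rewrite big_ord_recr big_ord_recl /= -exprM -expnS xK addrC.
by congr (_ + _); apply: eq_bigr => i _; rewrite -exprM -expnS.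
Qed.

Lemma trace_expr_card_pow j x : trace (x ^+ (#|F| ^ j)%N) = trace x.
Proof.
elim: j => [|j IHj]; first by rewrite expr1.
by rewrite expnSr exprM trace_expr_card IHj.
Qed.

Lemma trace_in1 x : trace x \in 1%VS.
Proof.
have := Fermat's_little_theorem 1%AS (trace x).
rewrite /= dimv1 expn1 -trace_pchar_pow ?trace_expr_card ?eqxx //.
by rewrite -(expn1 #|F|) pchar_nat_card_pow.
Qed.

Lemma exists_trace_neq0 : exists x : L, trace x != 0.
Proof.
pose LF := FinFieldExtType L; pose P : {poly LF} := \sum_(i < d) 'X^(#|F| ^ i).
have F_gt1 := finNzRing_gt1 F; have [d' d_eq] : exists d', d = d'.+1.
  by exists d.-1; rewrite prednK // (adim_gt0 {:L}%AS).
have P_neq0 : P != 0.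
  apply/eqP => /(congr1 (fun p : {poly LF} => p`_1)); apply/eqP.
  rewrite coef0 coef_sum d_eq big_ord_recl coefXn expn0 eqxx big1 ?addr0 ?oner_eq0 //.
  by move=> i _; rewrite coefXn eq_sym -[1%N](expn0 #|F|) eqn_exp2l.
have size_P : (size P <= #|F| ^ d' + 1)%N.
  rewrite addn1 /P d_eq; apply: leq_trans (size_sum _ _ _) _; apply/bigmax_leqP => i _.
  by rewrite size_polyXn ltnS leq_exp2l // -ltnS.
have : (#|[pred x | root P x]| < #|LF|)%N.
  apply: leq_trans (card_roots_lt_size P_neq0) (leq_trans size_P _).
  rewrite card_finFieldExt d_eq expnS addn1.
  by rewrite -[X in (X < _)%N]mul1n ltn_mul2r expn_gt0 (ltnW F_gt1).
rewrite -(cardC [pred x | root P x]) -{1}[#|_|]addn0 ltn_add2l => /card_gt0P[x].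
rewrite !inE /root horner_sum; under eq_bigr do rewrite hornerXn.
by exists x.
Qed.

Definition trF (x : L) : F := coord [tuple 1] 0 (trace x).

Lemma trF_is_scalar : scalar trF.
Proof. by move=> c x y; rewrite /trF linearP /= linearP. Qed.
HB.instance Definition _ :=
  GRing.isSemilinear.Build F L F _ trF (GRing.semilinear_linear trF_is_scalar).

Lemma trF_alg x : (trF x)%:A = trace x.
Proof.
have := coord_span (X := [tuple 1]) (v := trace x).
by rewrite span_seq1 trace_in1 big_ord1 => /(_ isT) <-.
Qed.

Lemma trF_nondegenerate y : (forall x, trF (x * y) = 0) -> y = 0.
Proof.
move=> trF_y0; apply/eqP/negPn/negP => y_neq0.
have [z] := exists_trace_neq0; rewrite -trF_alg -(divfK y_neq0 z) trF_y0.
by rewrite scale0r eqxx.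
Qed.

End FiniteFieldTrace.

Lemma full_rank_hermitian_code (F : finFieldType) (q n : nat) (C : {set 'M[F]_n}) :
  (1 < #|C|)%N -> {in C, forall c, hermitian q c} ->
  {in C &, forall c1 c2, c1 != c2 -> \rank (c1 - c2) = n} ->
  is_hermitian_d_code q n C.
Proof.
move=> /card_gt1P[c1 [c2 [C1 C2 neq]]] herm rk; split=> //.
- by apply/set0Pn; exists c1.
- by exists c1, c2; split => //; rewrite rk.
- by move=> c c' Cc Cc' neq'; rewrite rk.
Qed.

Section HermitianCode.

Variables (F : finFieldType) (L : fieldExtType F) (q : nat).
Hypotheses (q_pchar : [pchar F].-nat q) (card_F : #|F| = (q ^ 2)%N).
Hypothesis odd_dim : odd (\dim {:L}).
Local Notation d := (\dim {:L}).

Definition sigma (x : L) : L := x ^+ (q ^ d)%N.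

Lemma sigma_pchar : [pchar L].-nat (q ^ d)%N.
Proof. by rewrite pnatX (eq_pnat _ (pchar_lalg L)) q_pchar. Qed.

Fact sigma_is_nmod_morphism : nmod_morphism sigma.
Proof.
split=> [|x y]; last exact: exprDn_pchar sigma_pchar.
by rewrite /sigma expr0n gtn_eqF //; case/andP: sigma_pchar.
Qed.
Fact sigma_is_monoid_morphism : monoid_morphism sigma.
Proof. by split=> [|x y]; rewrite /sigma ?expr1n ?exprMn. Qed.
HB.instance Definition _ := GRing.isNmodMorphism.Build L L sigma sigma_is_nmod_morphism.
HB.instance Definition _ := GRing.isMonoidMorphism.Build L L sigma sigma_is_monoid_morphism.

Lemma sigmaK : involutive sigma.
Proof.
by move=> x; rewrite /sigma -exprM -expnD addnn -mul2n expnM -card_F expr_card_dim.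
Qed.

Lemma expq_dim : (q ^ d = q * #|F| ^ d./2)%N.
Proof. by rewrite card_F -expnM -expnS -{1}(odd_double_half d) odd_dim mul2n. Qed.

Lemma sigma_alg (c : F) : sigma c%:A = (c ^+ q)%:A.
Proof. by rewrite /sigma -!in_algE -rmorphXn expq_dim exprM expf_card_pow. Qed.

Lemma trace_sigma x : trace (sigma x) = trace x ^+ q.
Proof.
rewrite /sigma expq_dim exprM trace_expr_card_pow trace_pchar_pow //.
by rewrite (eq_pnat _ (pchar_lalg L)).
Qed.

Lemma sigmaZ (c : F) x : sigma (c *: x) = c ^+ q *: sigma x.
Proof. by rewrite -mulr_algl rmorphM /= sigma_alg mulr_algl. Qed.

Lemma trF_sigma x : trF (sigma x) = trF x ^+ q.
Proof.
have alg_inj : injective (fun c : F => c%:A : L) := fmorph_inj (in_alg L).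
apply: alg_inj; rewrite /= trF_alg trace_sigma -trF_alg.
by rewrite exprZn expr1n.
Qed.

Local Notation e := (vbasis {:L}).

Definition gram (a : L) : 'M[F]_d := \matrix_(i, j) trF (e`_i * a * sigma e`_j).

Lemma gramB a b : gram (a - b) = gram a - gram b.
Proof. by apply/matrixP => i j; rewrite !mxE mulrBr mulrBl linearB. Qed.

Lemma tr_gram a : (gram a)^T = map_mx (fun c => c ^+ q) (gram (sigma a)).
Proof.
apply/matrixP => i j; rewrite !mxE -trF_sigma !rmorphM /= !sigmaK.
by congr trF; ring.
Qed.

Lemma mul_gram (v : 'rV_d) a :
  v *m gram a = \row_j trF (passmx.vecof e v * a * sigma e`_j).
Proof.
apply/rowP => j; rewrite !mxE /passmx.vecof !mulr_suml linear_sum.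
by apply: eq_bigr => i _; rewrite mxE -!scalerAl linearZ.
Qed.

Lemma gram_row_eq0 y : (forall j : 'I_d, trF (y * sigma e`_j) = 0) -> y = 0.
Proof.
move=> y_e0; apply: trF_nondegenerate => x.
rewrite -(sigmaK x) (coord_vbasis (memvf (sigma x))) rmorph_sum mulr_suml linear_sum.
by apply: big1 => j _; rewrite /= sigmaZ -scalerAl linearZ /= [_ * y]mulrC y_e0 mulr0.
Qed.

Lemma gram_kernel (v1 v2 : 'rV_d) a b :
  v1 *m gram a + v2 *m gram b = 0 ->
  passmx.vecof e v1 * a + passmx.vecof e v2 * b = 0.
Proof.
rewrite !mul_gram => /rowP eq0; apply: gram_row_eq0 => j.
by have := eq0 j; rewrite !mxE -linearD mulrDl.
Qed.

Definition hgram (a b c : L) : 'M[F]_(d + d) :=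
  block_mx (gram a) (gram b) (gram (sigma b)) (gram c).

Lemma hgramB a b c a' b' c' :
  hgram a b c - hgram a' b' c' = hgram (a - a') (b - b') (c - c').
Proof. by rewrite /hgram opp_block_mx add_block_mx -!gramB rmorphB. Qed.

Lemma hgram_hermitian a b c :
  sigma a = a -> sigma c = c -> hermitian q (hgram a b c).
Proof.
move=> sa sc i j.
have trE : (hgram a b c)^T = map_mx (fun x => x ^+ q) (hgram a b c).
  by rewrite tr_block_mx map_block_mx !tr_gram sa sc sigmaK.
by have /matrixP/(_ i j) := trE; rewrite !mxE.
Qed.

Lemma hgram_unit a b c : a * c != b * sigma b -> hgram a b c \in unitmx.
Proof.
move=> det_neq0; rewrite unitmxE unitfE; apply/det0P => -[v].
rewrite -[v]hsubmxK mul_row_block => /negP v_neq0 /eqP.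
rewrite row_mx_eq0 => /andP[/eqP/gram_kernel kerL /eqP/gram_kernel kerR].
have vecof_eq0 := passmx.vecof_eq0 (vbasisP {:L}).
apply: v_neq0; rewrite row_mx_eq0 -(vecof_eq0 (lsubmx v)) -(vecof_eq0 (rsubmx v)).
by have [-> ->] := row2_kernel_eq0 det_neq0 kerL kerR; rewrite eqxx.
Qed.

Local Notation LF := (FinFieldExtType L).
Local Notation Q := (q ^ d)%N.

Lemma card_LF : #|LF| = (Q * Q)%N.
Proof. by rewrite card_finFieldExt card_F -expnM -expnD addnn -mul2n mulnC. Qed.

Lemma q_gt1 : (1 < q)%N.
Proof. by have := finNzRing_gt1 F; rewrite card_F -(exp1n 2) ltn_exp2r. Qed.

Lemma Q_gt1 : (1 < Q)%N.
Proof. by rewrite -(exp1n d) ltn_exp2r ?q_gt1 ?(adim_gt0 {:L}%AS). Qed.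

Lemma card_sigma_fixed : (#|[set x : LF | sigma x == x]| <= Q)%N.
Proof.
have P_neq0 : 'X^Q - 'X != 0 :> {poly LF} by rewrite -size_poly_gt0 size_XnsubX ?Q_gt1.
rewrite -ltnS -(size_XnsubX LF Q_gt1); apply: leq_ltn_trans (card_roots_lt_size P_neq0).
by apply/subset_leq_card/subsetP => x; rewrite !inE /root !hornerE subr_eq0.
Qed.

Lemma exists_sigma_antifixed : exists2 iota : L, iota != 0 & sigma iota = - iota.
Proof.
have /card_gt0P[x] : (0 < #|~: [set x : LF | sigma x == x]|)%N.
  rewrite cardsCs setCK card_LF subn_gt0; apply: leq_ltn_trans card_sigma_fixed _.
  by rewrite -[X in (X < _)%N]muln1 ltn_mul2l Q_gt1 ltnW ?Q_gt1.
rewrite !inE => x_moved; exists (x - sigma x); first by rewrite subr_eq0 eq_sym.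
by rewrite rmorphB /= sigmaK opprB.
Qed.

(* One point of each sigma-orbit of size two. *)
Definition pair_reps : {set LF} :=
  [set x : LF | (enum_rank x < enum_rank (sigma x : LF))%N].

Lemma pair_repsP x y : x \in pair_reps -> y \in pair_reps -> x != sigma y.
Proof.
rewrite !inE => ltx lty; apply/eqP => x_def; move: ltx lty.
by rewrite x_def sigmaK => /ltn_trans/[apply]; rewrite ltnn.
Qed.

Lemma card_pair_reps : (Q * Q <= #|pair_reps| * 2 + Q)%N.
Proof.
pose fixed := [set x : LF | sigma x == x].
have sub : ~: pair_reps \subset [set (sigma x : LF) | x : LF in pair_reps] :|: fixed.
  apply/subsetP => x; rewrite !inE -leqNgt leq_eqVlt.
  case/orP => [/eqP/val_inj/enum_rank_inj-> | lt]; first by rewrite eqxx orbT.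
  by apply/orP; left; apply/imsetP; exists (sigma x : LF); rewrite ?inE sigmaK.
rewrite -card_LF -(cardsC pair_reps) muln2 -addnn -addnA leq_add2l.
apply: leq_trans (subset_leq_card sub) (leq_trans (leq_card_setU _ _).1 _).
rewrite card_imset ?leq_add2l ?card_sigma_fixed // => x y.
by move/(congr1 sigma); rewrite !sigmaK.
Qed.

Definition code_params : {set LF * bool} := [set x | x.2 || (x.1 \in pair_reps)].

Lemma in_code_params b t : ((b, t) \in code_params) = t || (b \in pair_reps).
Proof. by rewrite inE. Qed.

Lemma card_code_params : #|code_params| = (Q * Q + #|pair_reps|)%N.
Proof.
have -> : code_params = setX setT [set true] :|: setX pair_reps [set false].
  by apply/setP => -[b []]; rewrite in_code_params !inE ?eqxx ?andbT.
rewrite cardsU !cardsX !cards1 cardsT card_LF !muln1.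
have -> : setX setT [set true] :&: setX pair_reps [set false] = set0.
  by apply/setP => -[b []]; rewrite !inE /= ?andbF.
by rewrite cards0 subn0.
Qed.

Section Codewords.

Variable iota : L.
Hypotheses (iota_neq0 : iota != 0) (sigma_iota : sigma iota = - iota).

Definition codeword (x : LF * bool) : 'M[F]_(d + d) :=
  let b : L := x.1 in
  if x.2 then hgram 0 b (if x.1 \in pair_reps then (b - sigma b) / iota else 0)
  else hgram (- (iota * (b - sigma b))) b 0.

Lemma codeword_hermitian x : hermitian q (codeword x).
Proof.
case: x => b [] /=; apply: hgram_hermitian; rewrite ?rmorph0 //.
  case: ifP => _; rewrite ?rmorph0 // rmorphM fmorphV rmorphB /= sigmaK sigma_iota.
  by rewrite invrN mulrN -mulNr opprB.
by rewrite rmorphN rmorphM rmorphB /= sigmaK sigma_iota; ring.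
Qed.

Lemma codeword_rank x y : x \in code_params -> y \in code_params -> x != y ->
  \rank (codeword x - codeword y) = (d + d)%N.
Proof.
wlog le_xy : x y / (x.2 <= y.2)%N.
  move=> main; case: (leqP x.2 y.2) => [|/ltnW] le; first exact: main.
  by move=> Px Py xy; rewrite -opprB mxrank_opp main // eq_sym.
have norm_neq0 (b b' : L) : b != b' -> (b - b') * sigma (b - b') != 0.
  by rewrite -subr_eq0 => neq; rewrite mulf_neq0 ?fmorph_eq0.
case: x y le_xy => b t [b' t']; rewrite !in_code_params /= => le Pb Pb' neq.
apply: mxrank_unit; rewrite /codeword /=.
case: t t' le Pb Pb' neq => [] [] //= _ Tb _ neq; rewrite hgramB; apply: hgram_unit.
- by rewrite subrr !mul0r eq_sym norm_neq0 //; apply: contraNneq neq => ->.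
- case: ifP => Tb'.
    rewrite rmorphB /= -subr_eq0.
    have -> : (- (iota * (b - sigma b)) - 0) * (0 - (b' - sigma b') / iota) -
        (b - b') * (sigma b - sigma b') = - ((b - sigma b') * (sigma b - b')).
      by field.
    by rewrite oppr_eq0 mulf_neq0 // subr_eq0 ?pair_repsP // eq_sym pair_repsP.
  rewrite !subr0 mulr0 eq_sym norm_neq0 //; apply: contraTneq Tb => ->.
  by rewrite Tb'.
- by rewrite subrr !mulr0 eq_sym norm_neq0 //; apply: contraNneq neq => ->.
Qed.

End Codewords.

Lemma exists_hermitian_code :
  exists C : {set 'M[F]_(d + d)},
    is_hermitian_d_code q (d + d) C /\ #|C| = ((3 * q ^ (d + d) - q ^ d) %/ 2)%N.
Proof.
have [iota iota_neq0 sigma_iota] := exists_sigma_antifixed.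
pose C0 := codeword iota @: code_params.
have rank_C0 : {in C0 &, forall c c', c != c' -> \rank (c - c') = (d + d)%N}.
  move=> _ _ /imsetP[x Px ->] /imsetP[y Py ->] neq.
  by apply: codeword_rank => //; apply: contraNneq neq => ->.
have card_C0 : #|C0| = (Q * Q + #|pair_reps|)%N.
  rewrite card_in_imset ?card_code_params // => x y Px Py eq_xy.
  apply/eqP/negPn/negP => /(codeword_rank iota_neq0 Px Py).
  by rewrite eq_xy subrr mxrank0; have := adim_gt0 {:L}%AS; lia.
set K := ((3 * _ - _) %/ 2)%N.
have [K_gt1 K_le] : (1 < K)%N /\ (K <= #|C0|)%N.
  have := Q_gt1; have := card_pair_reps; rewrite card_C0 /K expnD; nia.
have /card_gt0P[C] : (0 < #|[set C : {set _} | C \subset C0 & #|C| == K]|)%N.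
  by rewrite cards_draws bin_gt0.
rewrite inE => /andP[/subsetP sub /eqP card_C]; exists C; split=> //.
apply: full_rank_hermitian_code; rewrite ?card_C //.
- by move=> c /sub /imsetP[x _ ->]; apply: codeword_hermitian.
- by move=> c c' /sub Cc /sub Cc'; apply: rank_C0.
Qed.

End HermitianCode.

Theorem mainTheorem4 (q n : nat) (F : finFieldType) :
  prime_power q -> #|F| = (q ^ 2)%N ->
  (0 < n)%N -> ~~ odd n -> odd (n %/ 2) ->
  exists C : {set 'M[F]_n},
    is_hermitian_d_code q n C /\
    #|C| = ((3 * q ^ n - q ^ (n %/ 2)) %/ 2)%N.
Proof.
move=> [p [k [p_prime k_gt0 q_def]]] card_F _ n_even.
have q_pchar : [pchar F].-nat q.
  have pcharFp : p \in [pchar F].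
    by apply: (card_finPcharP (n := (k * 2)%N)); rewrite // card_F q_def expnM.
  by rewrite q_def pnatX (pnatE _ p_prime) pcharFp.
have n_def : n = (n %/ 2 + n %/ 2)%N by rewrite addnn -muln2 divnK ?dvdn2.
move: (n %/ 2)%N n_def => m -> m_odd.
have m_gt0 : (0 < m)%N by case: m m_odd.
have [L dim_L] := finField_ext_exists F m_gt0.
rewrite -dim_L; apply: exists_hermitian_code q_pchar card_F _.
by rewrite dim_L.
Qed.
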